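(* Let $\alpha=2$ and suppose users bid their true costs. Then the expected utility $\mathbb{E}_{\mathbf{Y}_{\mathcal{W}}}[g(\mathbf{y}_{\mathcal{S}})]$ achieved by the allocation policy of \textsc{SeqTGreedy} (defined in the context) is at least $\Bigl(\frac{e-1}{3e}-\gamma\Bigr)\cdot\mathrm{OPT}$, where $\mathrm{OPT}$ is the expected utility of the optimal adaptive policy \textsc{SeqOpt} with full knowledge of the true costs and $\gamma=f_{\max}/\mathrm{OPT}$.
   Context: Setting. $\mathcal{V}$ is a finite set and $f:2^{\mathcal{V}}\to\mathbb{R}_{\ge0}$ is monotone and submodular. $\mathcal{W}$ is a finite set of $N$ users and $\mathcal{O}\subseteq 2^{\mathcal{V}}$. Each user $w$ has a random sensing profile $Y_w$ with values in $\mathcal{O}$; the $Y_w$ are independent with known distributions, $\mathbf{Y}_{\mathcal{W}}=(Y_w)_{w\in\mathcal{W}}$. For $\mathcal{S}\subseteq\mathcal{W}$ and values $y_s$, write $\mathbf{y}_{\mathcal{S}}=\{(s,y_s):s\in\mathcal{S}\}$ and $g(\mathbf{y}_{\mathcal{S}})=f(\bigcup_{s\in\mathcal{S}}y_s)$. Each user's maximal contribution to the utility is bounded by a constant $f_{\max}$: $g(\mathbf{y}_{\mathcal{S}}\cup\{(w,y)\})-g(\mathbf{y}_{\mathcal{S}})\le f_{\max}$ for all $\mathbf{y}_{\mathcal{S}}$, $w$, $y$. The conditional expected marginal gain is $\Delta_g(w\mid\mathbf{y}_{\mathcal{S}})=\sum_{y\in\mathcal{O}}P(Y_w=y\mid\mathbf{y}_{\mathcal{S}})\,[g(\mathbf{y}_{\mathcal{S}}\cup\{(w,y)\})-g(\mathbf{y}_{\mathcal{S}})]$.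 Each user $w$ has a cost $c_w\ge0$ and bid $b_w$; here $b_w=c_w$. Budget $\mathcal{B}>0$. Allocation policy of \textsc{SeqTGreedy}. Set $\mathcal{S}=\emptyset$, $\mathbf{y}_{\mathcal{S}}=\emptyset$, $\mathcal{W}'=\mathcal{W}$. While $\mathcal{W}'\ne\emptyset$: let $w^*\in\arg\max_{w\in\mathcal{W}'}\Delta_g(w\mid\mathbf{y}_{\mathcal{S}})/b_w$ and $\Delta_{w^*}=\Delta_g(w^*\mid\mathbf{y}_{\mathcal{S}})$. If $\sum_{s\in\mathcal{S}}b_s+b_{w^*}\le\mathcal{B}$: if moreover $b_{w^*}\le\frac{\mathcal{B}}{\alpha}\cdot\frac{\Delta_{w^*}}{\sum_{s\in\mathcal{S}}\Delta_s+\Delta_{w^*}}$ then add $w^*$ to $\mathcal{S}$ (recording $\Delta_{w^*}$), observe the realization $y_{w^*}$ of $Y_{w^*}$, add $(w^*,y_{w^*})$ to $\mathbf{y}_{\mathcal{S}}$, remove $w^*$ from $\mathcal{W}'$; otherwise stop. If the budget test fails, remove $w^*$ from $\mathcal{W}'$. \textsc{SeqOpt}: an adaptive policy is a rule that sequentially selects a next user as a function of the users selected so far and their observed profiles; \textsc{SeqOpt} is an adaptive policy maximizing $\mathbb{E}_{\mathbf{Y}_{\mathcal{W}}}[g(\mathbf{y}_{\mathcal{S}})]$ among adaptive policies whose selected set always satisfies $\sum_{s\in\mathcal{S}}c_s\le\mathcal{B}$ (paying each participant her true cost). *)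

From HB Require Import structures.
From mathcomp Require Import all_boot all_order all_algebra.
From mathcomp Require Import reals.
From mathcomp Require Import sequences exp.
Set Implicit Arguments. Unset Strict Implicit. Unset Printing Implicit Defensive.
Import Order.TTheory GRing.Theory Num.Theory.
Local Open Scope ring_scope.

Section Defs.
Variables (R : realType) (V W : finType).

(* A (partial) realization y_S : a list of (user, observed profile) pairs. *)
Definition hist := seq (W * {set V}).

Definition gval (f : {set V} -> R) (h : hist) : R :=
  f (\bigcup_(x <- h) x.2).

Definition wf_hist (O : {set {set V}}) (h : hist) : bool :=
  uniq (map fst h) && all (fun x => x.2 \in O) h.

Definition monotone_fun (f : {set V} -> R) : Prop :=
  forall A B : {set V}, A \subset B -> f A <= f B.

Definition submodular (f : {set V} -> R) : Prop :=
  forall (A B : {set V}) (x : V), A \subset B -> x \notin B ->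
    f (x |: B) - f B <= f (x |: A) - f A.

(* p w y = P(Y_w = y); the Y_w are independent, so the joint law of
   the full realization phi is the product measure. *)
Definition prob_real (p : W -> {set V} -> R) (phi : {ffun W -> {set V}}) : R :=
  \prod_(w : W) p w (phi w).

Definition expect (p : W -> {set V} -> R) (X : {ffun W -> {set V}} -> R) : R :=
  \sum_(phi : {ffun W -> {set V}}) prob_real p phi * X phi.

(* Conditional expected marginal gain Delta_g(w | y_S).  By independence of
   the Y_w, P(Y_w = y | y_S) = P(Y_w = y) = p w y for w not observed in y_S. *)
Definition cond_gain (f : {set V} -> R) (p : W -> {set V} -> R)
  (h : hist) (w : W) : R :=
  \sum_(y : {set V}) p w y * (gval f (rcons h (w, y)) - gval f h).

(* Adaptive policies: next user as a function of the observations so far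
   ([None] = stop). *)
Definition policy := hist -> option W.

Definition policy_step (pi : policy) (phi : {ffun W -> {set V}}) (h : hist) : hist :=
  match pi h with
  | Some w => if w \in map fst h then h else rcons h (w, phi w)
  | None => h
  end.

(* The observations collected by [pi] on the realization [phi]
   (at most #|W| users can be selected). *)
Definition run_policy (pi : policy) (phi : {ffun W -> {set V}}) : hist :=
  iter #|W| (policy_step pi phi) [::].

Definition cost_of (c : W -> R) (h : hist) : R := \sum_(x <- h) c x.1.

Definition feasible (c : W -> R) (B : R) (pi : policy) : Prop :=
  forall phi, cost_of c (run_policy pi phi) <= B.

Definition exp_utility (f : {set V} -> R) (p : W -> {set V} -> R) (pi : policy) : R :=
  expect p (fun phi => gval f (run_policy pi phi)).

Definition argmax_rule (f : {set V} -> R) (p : W -> {set V} -> R) (b : W -> R)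
  (choose : hist -> {set W} -> W) : Prop :=
  forall (h : hist) (A : {set W}), A != set0 ->
    choose h A \in A /\
    forall w, w \in A -> cond_gain f p h w / b w <=
                        cond_gain f p h (choose h A) / b (choose h A).

(* State of SeqTGreedy: (observations y_S, remaining users W',
   sum of recorded Delta_s, stopped flag). *)
Definition gstate := (hist * {set W} * R * bool)%type.

Definition greedy_step (f : {set V} -> R) (p : W -> {set V} -> R) (b : W -> R)
  (B alpha : R) (choose : hist -> {set W} -> W) (phi : {ffun W -> {set V}})
  (st : gstate) : gstate :=
  let: (h, Wr, sD, stopped) := st in
  if stopped || (Wr == set0) then st else
  let ws := choose h Wr in
  let D := cond_gain f p h ws in
  if cost_of b h + b ws <= B then
    (if b ws <= B / alpha * (D / (sD + D))
     then (rcons h (ws, phi ws), Wr :\ ws, sD + D, false)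
     else (h, Wr, sD, true))
  else (h, Wr :\ ws, sD, false).

(* Each non-stopping step removes a user from W', so #|W| steps suffice. *)
Definition greedy_run (f : {set V} -> R) (p : W -> {set V} -> R) (b : W -> R)
  (B alpha : R) (choose : hist -> {set W} -> W) (phi : {ffun W -> {set V}}) : hist :=
  (iter #|W| (greedy_step f p b B alpha choose phi) ([::], [set: W], 0, false)).1.1.1.

Definition greedy_utility (f : {set V} -> R) (p : W -> {set V} -> R) (b : W -> R)
  (B alpha : R) (choose : hist -> {set W} -> W) : R :=
  expect p (fun phi => gval f (greedy_run f p b B alpha choose phi)).

End Defs.

From HB Require Import structures.
From mathcomp Require Import all_boot all_order all_algebra.
From mathcomp Require Import reals.
From mathcomp Require Import sequences exp.
From mathcomp Require Import ring lra.
Set Implicit Arguments. Unset Strict Implicit. Unset Printing Implicit Defensive.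
Import Order.TTheory GRing.Theory Num.Theory.
Local Open Scope ring_scope.

(* Write P h, g h and Q h for the probability of a partial realization h, the
   utility of its profiles and the expected utility obtained by running SeqOpt
   on top of h.  Adaptive submodularity gives: if every unselected user has
   conditional gain at most r times its cost, then Q h - P h * g h <= r B P h.
   For the greedy choice r is the best rate Delta_w / c_w, and this lets the
   potential
     P g + (1 - exp (- (B - cost h) / B)) (Q - P g) + 2 P (g - f0 - sD) - 3 P fmax
   be carried along the greedy run, where sD sums the recorded Delta_s: an
   accepted user of cost c_w lowers the factor in front of Q - P g by at most
   c_w / B, and c_w / B (Q - P g) <= P Delta_w is paid by its expected gain,
   while a step that breaks the budget or the proportional-share threshold of
   alpha = 2 stops the analysis with potential at most 3 P g.  Hence the
   potential stays below 3 times the expected greedy utility, and at the root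
   it is at least (1 - 1/e) OPT - 3 fmax. *)

Section Conditioning.
Variables (R : realType) (V W : finType) (p : W -> {set V} -> R).
Hypothesis p_ge0 : forall w y, 0 <= p w y.
Hypothesis p_sum1 : forall w, \sum_(y : {set V}) p w y = 1.

Definition consistent (phi : {ffun W -> {set V}}) (L : hist V W) : bool :=
  all (fun x => phi x.1 == x.2) L.

Definition expect_on (L : hist V W) (X : {ffun W -> {set V}} -> R) : R :=
  \sum_(phi | consistent phi L) prob_real p phi * X phi.

Definition prob_hist (L : hist V W) : R := expect_on L (fun _ => 1).

Lemma prob_real_ge0 phi : 0 <= prob_real p phi.
Proof. by apply: prodr_ge0 => w _; apply: p_ge0. Qed.

Lemma consistent_rcons phi L x :
  consistent phi (rcons L x) = consistent phi L && (phi x.1 == x.2).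
Proof. by rewrite /consistent all_rcons andbC. Qed.

Lemma eq_expect_on L X Y :
  (forall phi, consistent phi L -> X phi = Y phi) -> expect_on L X = expect_on L Y.
Proof. by move=> XY; apply: eq_bigr => phi /XY ->. Qed.

Lemma ler_expect_on L X Y :
  (forall phi, consistent phi L -> X phi <= Y phi) -> expect_on L X <= expect_on L Y.
Proof.
by move=> XY; apply: ler_sum => phi /XY; apply: ler_wpM2l; apply: prob_real_ge0.
Qed.

Lemma expect_on_ge0 L X :
  (forall phi, consistent phi L -> 0 <= X phi) -> 0 <= expect_on L X.
Proof. by move=> X0; apply: sumr_ge0 => phi /X0; apply: mulr_ge0 (prob_real_ge0 _). Qed.

Lemma prob_hist_ge0 L : 0 <= prob_hist L.
Proof. exact: expect_on_ge0. Qed.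

Lemma expect_on_cst L k : expect_on L (fun _ => k) = k * prob_hist L.
Proof. by rewrite /prob_hist /expect_on mulr_sumr; apply: eq_bigr => phi _; rewrite mulr1 mulrC. Qed.

Lemma expect_onD L X Y :
  expect_on L (fun phi => X phi + Y phi) = expect_on L X + expect_on L Y.
Proof. by rewrite /expect_on -big_split; apply: eq_bigr => phi _; rewrite mulrDr. Qed.

Lemma expect_on_shift L X a b :
  expect_on L (fun phi => X phi - a) =
  expect_on L (fun phi => X phi - b) + (b - a) * prob_hist L.
Proof.
rewrite -expect_on_cst -expect_onD; apply: eq_expect_on => phi _.
by rewrite addrA subrK.
Qed.

Lemma expect_on_rcons L w X :
  expect_on L X = \sum_(y : {set V}) expect_on (rcons L (w, y)) X.
Proof.
rewrite /expect_on.
have E y : \sum_(phi | consistent phi (rcons L (w, y))) prob_real p phi * X phi =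
    \sum_(phi | consistent phi L && (phi w == y)) prob_real p phi * X phi.
  by apply: eq_bigl => phi; rewrite consistent_rcons.
rewrite (eq_bigr _ (fun y _ => E y)) /=.
rewrite (exchange_big_dep (fun phi => consistent phi L)) /=; last by move=> y phi _ /andP[].
by apply: eq_bigr => phi Lphi; rewrite (big_pred1 (phi w)) // => y /=; rewrite Lphi eq_sym.
Qed.

Lemma sum_prob_hist_rcons L w :
  \sum_(y : {set V}) prob_hist (rcons L (w, y)) = prob_hist L.
Proof. by rewrite /prob_hist [in RHS](expect_on_rcons _ w). Qed.

Lemma expect_on_null L x X : x \in L -> p x.1 x.2 = 0 -> expect_on L X = 0.
Proof.
move=> xL px0; apply: big1 => phi Lphi.
rewrite /prob_real (bigD1 x.1) //=.
by move/allP: Lphi => /(_ x xL) /eqP ->; rewrite px0 !mul0r.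
Qed.

Definition compatible (L : hist V W) (v : W) (y : {set V}) : bool :=
  all (fun x => (x.1 == v) ==> (y == x.2)) L.

Lemma consistentE phi L : consistent phi L = [forall v, compatible L v (phi v)].
Proof.
apply/allP/forallP => [Lphi v|Lphi x xL].
  by apply/allP => x xL; apply/implyP => /eqP <-; rewrite (eqP (Lphi x xL)).
by move: (Lphi x.1) => /allP /(_ x xL); rewrite eqxx /= => /eqP ->.
Qed.

Lemma prodr_nat_bool (b : W -> bool) : \prod_(v : W) (b v)%:R = ([forall v, b v]%:R : R).
Proof.
case: (boolP [forall v, b v]) => [/forallP bT|/forallPn [v bv]].
  by rewrite big1 // => v _; rewrite bT.
by rewrite (bigD1 v) //= (negbTE bv) mul0r.
Qed.

(* This is where the independence of the profiles enters. *)
Lemma prob_hist_prod L :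
  prob_hist L = \prod_(v : W) \sum_(y : {set V}) p v y * (compatible L v y)%:R.
Proof.
rewrite bigA_distr_bigA /= /prob_hist /expect_on big_mkcond /=.
apply: eq_bigr => phi _.
rewrite big_split /= prodr_nat_bool -consistentE.
by case: (consistent phi L); rewrite ?mulr1 ?mulr0.
Qed.

Lemma prob_hist_nil : prob_hist [::] = 1.
Proof.
rewrite prob_hist_prod big1 // => v _.
by rewrite -[RHS](p_sum1 v); apply: eq_bigr => y _; rewrite mulr1.
Qed.

Lemma prob_hist_rcons L w y0 : w \notin map fst L ->
  prob_hist (rcons L (w, y0)) = p w y0 * prob_hist L.
Proof.
move=> wL; rewrite !prob_hist_prod (bigD1 w) //= [in RHS](bigD1 w) //=.
have compat_w y : compatible L w y.
  apply/allP => x xL; apply/implyP => /eqP xw.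
  by move: wL; rewrite -xw (map_f fst xL).
have compat_rcons v y :
    compatible (rcons L (w, y0)) v y = compatible L v y && ((w == v) ==> (y == y0)).
  by rewrite /compatible all_rcons andbC.
have -> : \sum_(y : {set V}) p w y * (compatible L w y)%:R = 1.
  by rewrite -[RHS](p_sum1 w); apply: eq_bigr => y _; rewrite compat_w mulr1.
have -> : \sum_(y : {set V}) p w y * (compatible (rcons L (w, y0)) w y)%:R = p w y0.
  rewrite (bigD1 y0) //= compat_rcons compat_w !eqxx mulr1 big1 ?addr0 // => y yy0.
  by rewrite compat_rcons compat_w eqxx /= (negbTE yy0) mulr0.
rewrite mul1r; congr (_ * _); apply: eq_bigr => v vw; apply: eq_bigr => y _.
by rewrite compat_rcons eq_sym (negbTE vw) andbT.
Qed.

End Conditioning.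

Section Coverage.
Variables (R : realType) (V W : finType) (f : {set V} -> R).

Definition covered (L : hist V W) : {set V} := \bigcup_(x <- L) x.2.

Lemma gvalE L : gval f L = f (covered L). Proof. by []. Qed.

Lemma covered_rcons L z : covered (rcons L z) = covered L :|: z.2.
Proof. by rewrite /covered big_rcons. Qed.

Lemma covered_cat L K : covered (L ++ K) = covered L :|: covered K.
Proof. by rewrite /covered big_cat. Qed.

Lemma sub_covered (L : hist V W) x : x \in L -> x.2 \subset covered L.
Proof. by move=> xL; rewrite /covered (big_rem x xL) /=; apply: subsetUl. Qed.

End Coverage.

Section Submodular.
Variables (R : realType) (V : finType) (f : {set V} -> R).
Hypothesis f_mono : monotone_fun f.
Hypothesis f_sub : submodular f.

Lemma submodularU (A B Y : {set V}) : A \subset B ->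
  f (B :|: Y) - f B <= f (A :|: Y) - f A.
Proof.
move=> AB; move: {2}#|Y| (erefl #|Y|) => n; elim: n Y => [|n IH] Y cardY.
  by move/eqP: cardY; rewrite cards_eq0 => /eqP ->; rewrite !setU0 !subrr.
have [x xY] : exists x, x \in Y by apply/set0Pn; rewrite -card_gt0 cardY.
have cardYx : #|Y :\ x| = n by move: cardY; rewrite (cardsD1 x Y) xY add1n => -[].
have split C : f (C :|: Y) - f C =
    (f (x |: (C :|: (Y :\ x))) - f (C :|: (Y :\ x))) + (f (C :|: (Y :\ x)) - f C).
  by rewrite -{1}(setD1K xY) setUCA subrKA.
rewrite split [leRHS]split; apply: lerD; last exact: IH.
have [xB|xB] := boolP (x \in B :|: (Y :\ x)).
  rewrite (setUidPr _) ?sub1set // subrr subr_ge0.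
  by apply: f_mono; apply: subsetUr.
by apply: f_sub => //; apply: setSU.
Qed.

End Submodular.

Section OptimalPolicyBound.
Variables (R : realType) (V W : finType).
Variables (f : {set V} -> R) (p : W -> {set V} -> R) (c : W -> R) (B : R).
Variable opt : policy V W.
Hypothesis f_mono : monotone_fun f.
Hypothesis f_sub : submodular f.
Hypothesis p_ge0 : forall w y, 0 <= p w y.
Hypothesis p_sum1 : forall w, \sum_(y : {set V}) p w y = 1.
Hypothesis c_ge0 : forall w, 0 <= c w.
Hypothesis opt_feas : feasible c B opt.

Definition run_from (k : hist V W) t phi := iter t (policy_step opt phi) k.

Definition opt_after (h : hist V W) : R :=
  expect_on p h (fun phi => gval f (h ++ run_policy opt phi)).

Lemma cost_of_rcons (k : hist V W) z : cost_of c (rcons k z) = cost_of c k + c z.1.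
Proof. by rewrite /cost_of -cats1 big_cat big_seq1. Qed.

Lemma run_from_fresh k t w phi : opt k = Some w -> w \notin map fst k ->
  run_from k t.+1 phi = run_from (rcons k (w, phi w)) t phi.
Proof. by move=> optk wk; rewrite /run_from iterSr /policy_step optk (negbTE wk). Qed.

Lemma gain_selected L w y : w \in map fst L ->
  prob_hist p (rcons L (w, y)) * (gval f (rcons L (w, y)) - gval f L) = 0.
Proof.
case/mapP=> x xL ->; rewrite mulrC -expect_on_cst; apply: big1 => phi.
rewrite consistent_rcons => /andP[/allP /(_ x xL) /eqP phix /eqP /= phiy].
have yL : y \subset covered L by rewrite -phiy phix; apply: sub_covered.
by rewrite !gvalE covered_rcons (setUidPl yL) subrr mulr0.
Qed.

(* Submodularity: a profile adds less to [h ++ k] than to [h] alone. *)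
Lemma expected_gain_fresh h k w : w \notin map fst (h ++ k) ->
  \sum_(y : {set V}) prob_hist p (rcons (h ++ k) (w, y)) *
     (gval f (rcons (h ++ k) (w, y)) - gval f (h ++ k))
  <= cond_gain f p h w * prob_hist p (h ++ k).
Proof.
move=> whk; under eq_bigr do rewrite prob_hist_rcons // mulrAC.
rewrite -mulr_suml ler_wpM2r ?(prob_hist_ge0 p_ge0) //; apply: ler_sum => y _.
rewrite ler_wpM2l // !gvalE !covered_rcons covered_cat.
by apply: submodularU => //; apply: subsetUl.
Qed.

Lemma expected_gain_step h k w r :
  (forall v, v \notin map fst h -> cond_gain f p h v <= r * c v) ->
  0 <= r -> w \notin map fst k ->
  \sum_(y : {set V}) prob_hist p (rcons (h ++ k) (w, y)) *
     (gval f (rcons (h ++ k) (w, y)) - gval f (h ++ k))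
  <= r * c w * prob_hist p (h ++ k).
Proof.
move=> gain_le r_ge0 wk; have [wh|wh] := boolP (w \in map fst h).
  rewrite big1 => [|y _]; last by apply: gain_selected; rewrite map_cat mem_cat wh.
  by rewrite !mulr_ge0 ?(prob_hist_ge0 p_ge0).
have whk : w \notin map fst (h ++ k) by rewrite map_cat mem_cat negb_or wh.
apply: (le_trans (expected_gain_fresh whk)).
by rewrite ler_wpM2r ?(prob_hist_ge0 p_ge0) ?gain_le.
Qed.

(* Each step of [opt] gains in expectation at most [r] times its cost; [k]
   holds the observations of [opt] so far, made on top of those of [h]. *)
Lemma opt_gain_run h r : 0 <= r ->
  (forall w, w \notin map fst h -> cond_gain f p h w <= r * c w) ->
  forall t k,
  expect_on p (h ++ k) (fun phi => gval f (h ++ run_from k t phi) - gval f (h ++ k))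
  <= r * expect_on p (h ++ k) (fun phi => cost_of c (run_from k t phi) - cost_of c k).
Proof.
move=> r_ge0 gain_le; elim=> [|t IH] k.
  rewrite /run_from /= (eq_expect_on p (Y := fun _ => 0)) => [|phi _]; last by rewrite subrr.
  rewrite [X in _ <= r * X](eq_expect_on p (Y := fun _ => 0)) => [|phi _]; last by rewrite subrr.
  by rewrite expect_on_cst mul0r mulr0.
have [stay|[w [optk wk]]] : (forall phi, policy_step opt phi k = k) \/
    exists w, opt k = Some w /\ w \notin map fst k.
  rewrite /policy_step; case: (opt k) => [w|]; last by left.
  by have [wk|wk] := boolP (w \in map fst k); [left | right; exists w].
have run_stay phi : run_from k t.+1 phi = run_from k t phi by rewrite /run_from iterSr stay.
under eq_expect_on do rewrite run_stay.
by under [X in _ <= r * X]eq_expect_on do rewrite run_stay.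
have run_y y phi : consistent phi (h ++ rcons k (w, y)) ->
    run_from k t.+1 phi = run_from (rcons k (w, y)) t phi.
  rewrite -rcons_cat consistent_rcons => /andP[_ /eqP phiw].
  by rewrite (run_from_fresh _ _ optk wk) (phiw : phi w = y).
rewrite (expect_on_rcons _ _ w) [X in _ <= r * X](expect_on_rcons _ _ w) mulr_sumr.
under eq_bigr => y _.
  rewrite rcons_cat (expect_on_shift _ _ _ _ (gval f (h ++ rcons k (w, y)))).
  under eq_expect_on => phi /run_y -> do [].
  over.
under [X in _ <= X]eq_bigr => y _.
  rewrite rcons_cat (expect_on_shift _ _ _ _ (cost_of c (rcons k (w, y)))) mulrDr.
  under eq_expect_on => phi /run_y -> do [].
  over.
rewrite !big_split /=; apply: lerD; first by apply: ler_sum => y _; apply: IH.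
under eq_bigr do rewrite -rcons_cat mulrC.
under [X in _ <= X]eq_bigr do rewrite cost_of_rcons /= addrAC subrr add0r -rcons_cat mulrA.
rewrite -mulr_sumr sum_prob_hist_rcons; exact: expected_gain_step.
Qed.

Lemma opt_gain_le h r : 0 <= r ->
  (forall w, w \notin map fst h -> cond_gain f p h w <= r * c w) ->
  opt_after h - prob_hist p h * gval f h <= r * B * prob_hist p h.
Proof.
move=> r_ge0 gain_le; have := opt_gain_run r_ge0 gain_le #|W| [::].
rewrite cats0 (eq_expect_on p (Y := fun phi => gval f (h ++ run_policy opt phi)
  + - gval f h)) // expect_onD expect_on_cst mulNr [gval f h * _]mulrC => run_le.
apply: (le_trans run_le); rewrite -mulrA ler_wpM2l // -expect_on_cst.
by apply: (ler_expect_on p_ge0) => phi _; rewrite /cost_of big_nil subr0; apply: opt_feas.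
Qed.

Lemma opt_after_ge h : prob_hist p h * gval f h <= opt_after h.
Proof.
rewrite mulrC -expect_on_cst; apply: (ler_expect_on p_ge0) => phi _.
by rewrite !gvalE covered_cat; apply: f_mono; apply: subsetUl.
Qed.

Lemma opt_after_le_rcons h w :
  opt_after h <= \sum_(y : {set V}) opt_after (rcons h (w, y)).
Proof.
rewrite /opt_after (expect_on_rcons _ _ w); apply: ler_sum => y _.
apply: (ler_expect_on p_ge0) => phi _; rewrite !gvalE !covered_cat covered_rcons.
by apply: f_mono; apply: setSU; apply: subsetUl.
Qed.

End OptimalPolicyBound.

Section Kappa.
Variables (R : realType) (B : R).

(* The share of the remaining optimum credited to the greedy when [b] of the
   budget [B] is left. *)
Definition kappa (b : R) : R := 1 - expR (- (b / B)).

Lemma kappa_ge0 b : 0 <= B -> 0 <= b -> 0 <= kappa b.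
Proof.
by move=> B0 b0; rewrite subr_ge0 expR_le1 oppr_le0 divr_ge0.
Qed.

Lemma kappa_le1 b : kappa b <= 1.
Proof. by rewrite lerBlDr lerDl expR_ge0. Qed.

Lemma kappa_le b : kappa b <= b / B.
Proof. have := expR_ge1Dx (- (b / B)); rewrite /kappa; lra. Qed.

Lemma kappa_sub a b : kappa b - kappa (b - a) <= (1 - kappa (b - a)) * (a / B).
Proof.
have split : expR (- (b / B)) = expR (- ((b - a) / B)) * expR (- (a / B)).
  by rewrite -expRD -opprD -mulrDl subrK.
have := expR_ge1Dx (- (a / B)); have := expR_ge0 (- ((b - a) / B)).
rewrite /kappa split; nra.
Qed.

End Kappa.

Section Greedy.
Variables (R : realType) (V W : finType).
Variables (f : {set V} -> R) (O : {set {set V}}) (p : W -> {set V} -> R).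
Variables (c : W -> R) (B fmax : R) (choose : hist V W -> {set W} -> W).
Variable opt : policy V W.
Hypothesis f_ge0 : forall A, 0 <= f A.
Hypothesis f_mono : monotone_fun f.
Hypothesis f_sub : submodular f.
Hypothesis p_ge0 : forall w y, 0 <= p w y.
Hypothesis p_sum1 : forall w, \sum_(y : {set V}) p w y = 1.
Hypothesis p_O : forall w y, p w y != 0 -> y \in O.
Hypothesis fmax_bound : forall (h : hist V W) (w : W) (y : {set V}),
  wf_hist O h -> y \in O -> gval f (rcons h (w, y)) - gval f h <= fmax.
Hypothesis c_pos : forall w, 0 < c w.
Hypothesis B_pos : 0 < B.
Hypothesis choose_argmax : argmax_rule f p c choose.
Hypothesis opt_feas : feasible c B opt.

Let c_ge0 w : 0 <= c w := ltW (c_pos w).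
Let opt_gap_le := opt_gain_le f_mono f_sub p_ge0 p_sum1 c_ge0 opt_feas.

Definition greedy_from n (st : gstate R V W) phi : R :=
  gval f (iter n (greedy_step f p c B 2 choose phi) st).1.1.1.

Lemma greedy_from_ge n st phi : gval f st.1.1.1 <= greedy_from n st phi.
Proof.
elim: n st => [|n IH] st //; rewrite /greedy_from iterSr; apply: le_trans _ (IH _).
case: st => [[[h Wr] sD] []] //=; case: ifP => // _; case: ifP => // _.
case: ifP => //= _; rewrite !gvalE covered_rcons.
by apply: f_mono; apply: subsetUl.
Qed.

Lemma cond_gain_ge0 h w : 0 <= cond_gain f p h w.
Proof.
apply: sumr_ge0 => y _; rewrite mulr_ge0 // subr_ge0 !gvalE covered_rcons.
by apply: f_mono; apply: subsetUl.
Qed.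

Lemma cond_gain_le h w : wf_hist O h -> cond_gain f p h w <= fmax.
Proof.
move=> wf_h; rewrite -[leRHS]mul1r -(p_sum1 w) mulr_suml.
apply: ler_sum => y _; have [->|py] := eqVneq (p w y) 0; first by rewrite !mul0r.
by apply: ler_wpM2l => //; apply: fmax_bound => //; apply: p_O py.
Qed.

(* [choose] provides an inhabitant of [W]. *)
Lemma fmax_ge0 : 0 <= fmax.
Proof.
pose w0 := choose [::] set0.
have [y py] : exists y, p w0 y != 0.
  apply/existsP; apply: contraT; rewrite negb_exists => /forallP p0.
  have := p_sum1 w0; rewrite big1 => [/eqP|y _]; last exact/eqP/negPn/p0.
  by rewrite eq_sym oner_eq0.
apply: le_trans (@fmax_bound [::] w0 y isT (p_O py)).
by rewrite subr_ge0 !gvalE covered_rcons; apply: f_mono; apply: subsetUl.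
Qed.

(* Along the greedy run [sD] accumulates the conditional gains of the selected
   users, so [gval f h - f set0 - sD] has zero mean: the last two terms only
   pay for the cases where the analysis stops. *)
Definition potential (h : hist V W) (sD : R) : R :=
  prob_hist p h * gval f h
  + kappa B (B - cost_of c h) * (opt_after f p opt h - prob_hist p h * gval f h)
  + 2 * (prob_hist p h * (gval f h - f set0 - sD)) - 3 * (prob_hist p h * fmax).

Lemma potential_null h sD x : x \in h -> p x.1 x.2 = 0 -> potential h sD = 0.
Proof.
move=> xh px0; rewrite /potential /opt_after /prob_hist.
rewrite !(expect_on_null _ xh px0); lra.
Qed.

Lemma potential_complete h sD : (forall w, w \in map fst h) -> 0 <= sD ->
  cost_of c h <= B -> potential h sD <= 3 * (prob_hist p h * gval f h).
Proof.
move=> all_sel sD_ge0 cost_le; rewrite /potential.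
have gap_le0 : opt_after f p opt h - prob_hist p h * gval f h <= 0 * B * prob_hist p h.
  by apply: opt_gap_le => // w; rewrite all_sel.
rewrite !mul0r in gap_le0.
have kappa0 : 0 <= kappa B (B - cost_of c h) by apply: kappa_ge0; rewrite ?subr_ge0 // ltW.
have := mulr_ge0_le0 kappa0 gap_le0.
have P0 := prob_hist_ge0 p_ge0 h.
have := mulr_ge0 P0 sD_ge0; have := mulr_ge0 P0 fmax_ge0.
have := mulr_ge0 P0 (f_ge0 set0); lra.
Qed.

Section GreedyStep.
Variables (h : hist V W) (Wr : {set W}) (sD : R).
Hypothesis wf_h : wf_hist O h.
Hypothesis Wr_def : Wr = [set w | w \notin map fst h].
Hypothesis Wr_neq0 : Wr != set0.
Hypothesis sD_ge0 : 0 <= sD.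

Let w := choose h Wr.
Let D := cond_gain f p h w.
Let P := prob_hist p h.
Let g := gval f h.
Let Q := opt_after f p opt h.

Lemma chosen_in : w \in Wr.
Proof. by have [] := choose_argmax h Wr_neq0. Qed.

Lemma chosen_fresh : w \notin map fst h.
Proof. by have := chosen_in; rewrite Wr_def inE. Qed.

(* The greedy choice maximizes gain per cost, so [opt] gains at most at
   this rate over its budget. *)
Lemma opt_gap_chosen : Q - P * g <= D / c w * B * P.
Proof.
apply: opt_gap_le; first by rewrite divr_ge0 ?cond_gain_ge0.
move=> v vh; have [_ /(_ v)] := choose_argmax h Wr_neq0.
by rewrite -/w -/D Wr_def inE ler_pdivrMr ?c_pos // => /(_ vh).
Qed.

Lemma opt_gap_ge0 : 0 <= Q - P * g.
Proof. by rewrite subr_ge0 opt_after_ge. Qed.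

Lemma opt_gap_share : c w / B * (Q - P * g) <= P * D.
Proof.
apply: le_trans (ler_wpM2l _ opt_gap_chosen) _; first by rewrite divr_ge0 ?ltW.
by have -> : c w / B * (D / c w * B * P) = P * D by field; rewrite !gt_eqF.
Qed.

Lemma greedy_from_active n phi : greedy_from n.+1 (h, Wr, sD, false) phi =
  greedy_from n (if cost_of c h + c w <= B then
      if c w <= B / 2 * (D / (sD + D)) then (rcons h (w, phi w), Wr :\ w, sD + D, false)
      else (h, Wr, sD, true)
    else (h, Wr :\ w, sD, false)) phi.
Proof. by rewrite /greedy_from iterSr /greedy_step /= (negbTE Wr_neq0). Qed.

Lemma potential_over_budget :
  B < cost_of c h + c w -> potential h sD <= 3 * (P * g).
Proof.
move=> over; have kappa_le_cw : kappa B (B - cost_of c h) <= c w / B.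
  by apply: le_trans (kappa_le _ _) _; rewrite ler_pM2r ?invr_gt0 //; lra.
have gap_le : kappa B (B - cost_of c h) * (Q - P * g) <= P * fmax.
  apply: le_trans (ler_wpM2r opt_gap_ge0 kappa_le_cw) _.
  apply: (le_trans opt_gap_share).
  by rewrite ler_wpM2l ?(prob_hist_ge0 p_ge0) ?cond_gain_le.
have P0 : 0 <= P := prob_hist_ge0 p_ge0 h.
have := mulr_ge0 P0 sD_ge0; have := mulr_ge0 P0 fmax_ge0.
have := mulr_ge0 P0 (f_ge0 set0); rewrite /potential -/P -/g -/Q; lra.
Qed.

Lemma potential_below_threshold :
  B / 2 * (D / (sD + D)) < c w -> potential h sD <= 3 * (P * g).
Proof.
move=> below; have D0 : 0 <= D := cond_gain_ge0 h w.
have rate_le : D / c w * B <= 2 * (sD + D).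
  have [s0|s_neq0] := eqVneq (sD + D) 0.
    move/eqP: s0; rewrite paddr_eq0 // => /andP[/eqP sD0 /eqP D_eq0].
    by rewrite D_eq0 sD0 !mul0r addr0 mulr0.
  have s_gt0 : 0 < sD + D by rewrite lt0r s_neq0 addr_ge0.
  rewrite mulrAC ler_pdivrMr ?c_pos //; apply: ltW.
  by move: below; rewrite mulf_div ltr_pdivrMr ?mulr_gt0 //; lra.
have gap_le : kappa B (B - cost_of c h) * (Q - P * g) <= 2 * (P * sD) + 2 * (P * fmax).
  apply: le_trans (ler_wpM2r opt_gap_ge0 (kappa_le1 _ _)) _; rewrite mul1r.
  apply: (le_trans opt_gap_chosen).
  apply: le_trans (ler_wpM2r (prob_hist_ge0 p_ge0 h) rate_le) _.
  have := ler_wpM2l (prob_hist_ge0 p_ge0 h) (cond_gain_le w wf_h); rewrite -/P -/D; lra.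
have P0 : 0 <= P := prob_hist_ge0 p_ge0 h.
have := mulr_ge0 P0 fmax_ge0; have := mulr_ge0 P0 (f_ge0 set0).
rewrite /potential -/P -/g -/Q; lra.
Qed.

Lemma potential_accept : cost_of c h + c w <= B ->
  potential h sD <= \sum_(y : {set V}) potential (rcons h (w, y)) (sD + D).
Proof.
move=> within; have k_sub : kappa B (B - cost_of c h) - kappa B (B - (cost_of c h + c w))
    <= (1 - kappa B (B - (cost_of c h + c w))) * (c w / B).
  have -> : B - (cost_of c h + c w) = B - cost_of c h - c w by rewrite opprD addrA.
  exact: kappa_sub.
set k := kappa B (B - cost_of c h).
set k' := kappa B (B - (cost_of c h + c w)).
pose Py y := prob_hist p (rcons h (w, y)).
pose gy y := gval f (rcons h (w, y)).
have expand y : potential (rcons h (w, y)) (sD + D) = (3 - k') * (Py y * gy y)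
    + k' * opt_after f p opt (rcons h (w, y)) - (2 * (f set0 + (sD + D)) + 3 * fmax) * Py y.
  by rewrite /potential cost_of_rcons -/k' /Py /gy; ring.
have sum_P : \sum_(y : {set V}) Py y = P by apply: sum_prob_hist_rcons.
have sum_pg : \sum_(y : {set V}) p w y * gy y = g + D.
  rewrite /D /cond_gain -/g; under [X in _ = _ + X]eq_bigr do rewrite mulrBr.
  by rewrite sumrB -mulr_suml p_sum1 mul1r addrC subrK.
have sum_Pg : \sum_(y : {set V}) Py y * gy y = P * (g + D).
  rewrite -sum_pg mulr_sumr; apply: eq_bigr => y _.
  by rewrite /Py (prob_hist_rcons p_sum1 _ chosen_fresh) -/P mulrCA mulrA.
have sum_Q : Q <= \sum_(y : {set V}) opt_after f p opt (rcons h (w, y)).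
  exact: opt_after_le_rcons.
rewrite (eq_bigr _ (fun y _ => expand y)) sumrB big_split /= -!mulr_sumr sum_P sum_Pg.
have k'0 : 0 <= k' by apply: kappa_ge0; rewrite ?subr_ge0 // ltW.
have k'1 : 0 <= 1 - k' by rewrite subr_ge0 kappa_le1.
have := ler_wpM2r opt_gap_ge0 k_sub; have := ler_wpM2l k'1 opt_gap_share.
have := ler_wpM2l k'0 sum_Q.
rewrite /potential -/P -/g -/Q -/k -/k'; nra.
Qed.

End GreedyStep.

Lemma greedy_from_stopped n h Wr sD phi : greedy_from n (h, Wr, sD, true) phi = gval f h.
Proof. by rewrite /greedy_from iter_fix. Qed.

Lemma potential_le_greedy_done n h Wr sD :
  Wr = [set w | w \notin map fst h] -> Wr = set0 -> 0 <= sD -> cost_of c h <= B ->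
  potential h sD <= 3 * expect_on p h (greedy_from n (h, Wr, sD, false)).
Proof.
move=> Wr_def Wr0 sD_ge0 cost_le.
rewrite (eq_expect_on p (Y := fun _ => gval f h)) => [|phi _]; last first.
  by rewrite /greedy_from iter_fix // /greedy_step Wr0 eqxx.
rewrite expect_on_cst [gval f h * _]mulrC; apply: potential_complete => // v.
by have := in_set0 v; rewrite -Wr0 Wr_def inE => /negbFE.
Qed.

Lemma potential_le_greedy n h Wr sD :
  uniq (map fst h) -> Wr = [set w | w \notin map fst h] -> (#|Wr| <= n)%N ->
  0 <= sD -> cost_of c h <= B ->
  potential h sD <= 3 * expect_on p h (greedy_from n (h, Wr, sD, false)).
Proof.
elim: n h Wr sD => [|n IH] h Wr sD uniq_h Wr_def card_Wr sD_ge0 cost_le.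
  by apply: potential_le_greedy_done => //; apply/eqP; rewrite -cards_eq0 -leqn0.
have [pos_h|/allPn[x xh /negPn/eqP px0]] := boolP (all (fun x => p x.1 x.2 != 0) h);
  last by rewrite (potential_null _ xh px0) (expect_on_null _ xh px0) mulr0.
have [Wr0|Wr_neq0] := eqVneq Wr set0; first exact: potential_le_greedy_done.
have wf_h : wf_hist O h by rewrite /wf_hist uniq_h; apply/allP => x /(allP pos_h)/p_O.
set w := choose h Wr; set D := cond_gain f p h w.
have [within|over] := lerP (cost_of c h + c w) B; last first.
  apply: le_trans (potential_over_budget wf_h Wr_def Wr_neq0 sD_ge0 over) _.
  rewrite ler_pM2l // mulrC -expect_on_cst; apply: (ler_expect_on p_ge0) => phi _.
  by rewrite greedy_from_active // -/w (lt_geF over); apply: (greedy_from_ge _ (h, _, _, _)).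
have [accept|below] := lerP (c w) (B / 2 * (D / (sD + D))); last first.
  apply: le_trans (potential_below_threshold wf_h Wr_def Wr_neq0 sD_ge0 below) _.
  rewrite ler_pM2l // mulrC -expect_on_cst le_eqVlt; apply/orP; left; apply/eqP.
  apply: eq_expect_on => phi _.
  by rewrite greedy_from_active // -/w -/D within (lt_geF below) greedy_from_stopped.
apply: le_trans (potential_accept sD Wr_def Wr_neq0 within) _.
rewrite (expect_on_rcons _ _ w) mulr_sumr; apply: ler_sum => y _.
rewrite (eq_expect_on p (Y := greedy_from n (rcons h (w, y), Wr :\ w, sD + D, false))).
  apply: IH.
  - by rewrite map_rcons rcons_uniq (chosen_fresh Wr_def Wr_neq0) uniq_h.
  - apply/setP => v; rewrite in_setD1 inE map_rcons mem_rcons inE negb_or.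
    by congr (_ && _); rewrite Wr_def inE.
  - by move: card_Wr; rewrite (cardsD1 w Wr) (chosen_in h Wr_neq0) add1n.
  - by rewrite addr_ge0 ?cond_gain_ge0.
  - by rewrite cost_of_rcons.
move=> phi; rewrite consistent_rcons => /andP[_ /eqP /= phiw].
by rewrite greedy_from_active // -/w -/D within accept phiw.
Qed.

Lemma greedy_utility_ge :
  (1 - expR (-1)) / 3 * exp_utility f p opt - fmax <= greedy_utility f p c B 2 choose.
Proof.
have potential_le : potential [::] 0 <= 3 * greedy_utility f p c B 2 choose.
  apply: (potential_le_greedy (Wr := [set: W])) => //.
  - by rewrite cardsT.
  - by rewrite /cost_of big_nil ltW.
have opt_nil : opt_after f p opt [::] = exp_utility f p opt by [].
move: potential_le; rewrite /potential opt_nil prob_hist_nil // /cost_of big_nil subr0.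
rewrite /kappa divff ?gt_eqF // /gval big_nil.
have := expR_ge0 (- (1 : R)); have := f_ge0 set0; nra.
Qed.

End Greedy.

Theorem theorem4 (R : realType) (V W : finType)
  (f : {set V} -> R) (O : {set {set V}}) (p : W -> {set V} -> R)
  (c : W -> R) (B fmax : R) (choose : hist V W -> {set W} -> W)
  (opt : policy V W) :
  (forall A, 0 <= f A) -> monotone_fun f -> submodular f ->
  (forall w y, 0 <= p w y) ->
  (forall w, \sum_(y : {set V}) p w y = 1) ->
  (forall w y, p w y != 0 -> y \in O) ->
  (forall (h : hist V W) (w : W) (y : {set V}), wf_hist O h -> y \in O ->
     gval f (rcons h (w, y)) - gval f h <= fmax) ->
  (forall w, 0 < c w) -> 0 < B ->
  (* bids equal true costs: b = c *)
  argmax_rule f p c choose ->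
  (* opt is SeqOpt: an optimal budget-feasible adaptive policy *)
  feasible c B opt ->
  (forall pi, feasible c B pi -> exp_utility f p pi <= exp_utility f p opt) ->
  let OPT := exp_utility f p opt in
  let gamma := fmax / OPT in
  ((expR 1 - 1) / (3 * expR 1) - gamma) * OPT
    <= greedy_utility f p c B 2 choose.
Proof.
move=> f_ge0 f_mono f_sub p_ge0 p_sum1 p_O fmax_bound c_pos B_pos choose_argmax opt_feas _.
cbv zeta; set OPT := exp_utility f p opt.
have [OPT0|OPT_neq0] := eqVneq OPT 0.
  rewrite OPT0 mulr0; apply: sumr_ge0 => phi _.
  exact: mulr_ge0 (prob_real_ge0 p_ge0 phi) (f_ge0 _).
have -> : ((expR 1 - 1) / (3 * expR 1) - fmax / OPT) * OPT
    = (1 - expR (-1)) / 3 * OPT - fmax.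
  by rewrite expRN; field; rewrite OPT_neq0 gt_eqF ?expR_gt0.
exact: (greedy_utility_ge f_ge0 f_mono f_sub p_ge0 p_sum1 p_O fmax_bound c_pos B_pos
  choose_argmax opt_feas).
Qed.
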